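(* Let $X\subset\mathbb{R}^n$ be bounded, let $X_I, X_U\subset X$ with $X_I\cap X_U=\emptyset$. Let $f\colon X\to\mathbb{R}^n$ define the dynamics $x(k+1)=f(x(k))$ (assumed to have unique solutions). Fix $T\in\mathbb{N}_+$ and let $\Xi$ be the set of all trajectories $\xi=\{x(k)\}_{k=0}^T$ consistent with these dynamics and with $x(0)\in X_I$. Let $V\colon\mathbb{R}^n\to\mathbb{R}$ be continuous and suppose that (i) $V(x)\le 0$ for all $x\in X_I$; (ii) $V(x)>0$ for all $x\in X_U$; (iii) for every trajectory $\xi=\{x(k)\}_{k=0}^T\in\Xi$, $$V(x(k+1))-V(x(k))<\frac1T\Big(\inf_{x\in X_U}V(x)-\sup_{x\in X_I}V(x)\Big),\qquad k=0,\dots,T-1.$$ Then $V$ is a safety (barrier) certificate: for every $\xi\in\Xi$ and every $k\in\{0,\dots,T\}$, $x(k)\notin X_U$.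
   Context: Trajectories are finite sequences of states generated by the deterministic discrete-time dynamics from an initial state in $X_I$. *)

From HB Require Import structures.
From mathcomp Require Import all_boot all_order all_algebra.
From mathcomp Require Import all_classical all_reals all_analysis.
Set Implicit Arguments. Unset Strict Implicit. Unset Printing Implicit Defensive.
Import Order.TTheory GRing.Theory Num.Theory.
Import numFieldNormedType.Exports.
Local Open Scope classical_set_scope.
Local Open Scope ring_scope.

(* A trajectory xi = {x(k)}_{k=0}^T of x(k+1) = f(x(k)) with x(0) in X_I.
   f is only meaningful on X: we require x(k) \in X for k = 0..T and
   x(k+1) = f(x(k)) for k = 0..T-1. Values of x beyond T are irrelevant. *)
Definition trajectory {R : realType} {n : nat} (X XI : set 'rV[R]_n)
  (f : 'rV[R]_n -> 'rV[R]_n) (T : nat) (x : nat -> 'rV[R]_n) : Prop :=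
  XI (x 0%N) /\
  (forall k, (k <= T)%N -> X (x k)) /\
  (forall k, (k < T)%N -> x k.+1 = f (x k)).

(* If some x(k) lay in X_U, then X_I and X_U would both be nonempty, so the
   gap c := inf_{X_U} V - sup_{X_I} V is a finite real number, nonnegative
   because V <= 0 on X_I and V > 0 on X_U; also k > 0 since X_I and X_U are
   disjoint. Summing the k <= T increments, each smaller than c / T, gives
   V(x(k)) - V(x(0)) < c, contradicting V(x(k)) >= inf_{X_U} V and
   V(x(0)) <= sup_{X_I} V. *)
From HB Require Import structures.
From mathcomp Require Import all_boot all_order all_algebra.
From mathcomp Require Import all_classical all_reals all_analysis.
Set Implicit Arguments. Unset Strict Implicit. Unset Printing Implicit Defensive.
Import Order.TTheory GRing.Theory Num.Theory.
Import numFieldNormedType.Exports.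
Local Open Scope classical_set_scope.
Local Open Scope ring_scope.

Section IncrementBounds.
Variable R : realFieldType.
Implicit Types (u : nat -> R) (c d : R).

Lemma telescope_increments_lt u d k : (0 < k)%N ->
  (forall j, (j < k)%N -> u j.+1 - u j < d) -> u k - u 0%N < k%:R * d.
Proof.
move=> k_gt0 du; rewrite -(telescope_sumr _ (leq0n k)) -[k in k%:R]subn0.
rewrite mulr_natl -sumr_const_nat; exact: ltr_sum_nat.
Qed.

Lemma increments_lt_gap u c (T k : nat) : (0 < k <= T)%N -> 0 <= c ->
  (forall j, (j < k)%N -> u j.+1 - u j < c / T%:R) -> u k - u 0%N < c.
Proof.
move=> /andP[k_gt0 k_le_T] c_ge0 du.
apply: lt_le_trans (telescope_increments_lt k_gt0 du) _.
have T_gt0 : 0 < T%:R :> R by rewrite ltr0n (leq_trans k_gt0).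
by rewrite mulrCA ler_piMr // ler_pdivrMr // mul1r ler_nat.
Qed.

End IncrementBounds.

Section FiniteExtremaOfImages.
Variables (R : realType) (T : Type).
Implicit Types (A : set T) (g : T -> R).

Lemma ereal_inf_image_fin A g (m : R) a : A a -> (forall x, A x -> m <= g x) ->
  exists2 i : R, ereal_inf [set (g x)%:E | x in A] = i%:E & m <= i <= g a.
Proof.
move=> Aa g_ge.
have lb : (m%:E <= ereal_inf [set (g x)%:E | x in A])%E.
  by apply: le_ereal_inf_tmp => _ [x Ax <-]; rewrite lee_fin g_ge.
have ub : (ereal_inf [set (g x)%:E | x in A] <= (g a)%:E)%E.
  by apply: ereal_inf_lbound; exists a.
move: lb ub; case: ereal_inf => [i| |] //; rewrite !lee_fin => mi ia.
by exists i; rewrite ?mi.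
Qed.

Lemma ereal_sup_image_fin A g (M : R) a : A a -> (forall x, A x -> g x <= M) ->
  exists2 s : R, ereal_sup [set (g x)%:E | x in A] = s%:E & g a <= s <= M.
Proof.
move=> Aa g_le.
have ub : (ereal_sup [set (g x)%:E | x in A] <= M%:E)%E.
  by apply: ge_ereal_sup => _ [x Ax <-]; rewrite lee_fin g_le.
have lb : ((g a)%:E <= ereal_sup [set (g x)%:E | x in A])%E.
  by apply: ereal_sup_ubound; exists a.
move: lb ub; case: ereal_sup => [s| |] //; rewrite !lee_fin => ga_le_s s_le_M.
by exists s; rewrite ?ga_le_s.
Qed.

End FiniteExtremaOfImages.

Theorem proposition2 (R : realType) (n : nat) (X XI XU : set 'rV[R]_n)
  (f : 'rV[R]_n -> 'rV[R]_n) (T : nat) (V : 'rV[R]_n -> R) :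
  bounded_set X -> XI `<=` X -> XU `<=` X -> XI `&` XU = set0 ->
  (0 < T)%N ->
  continuous V ->
  (forall x, XI x -> V x <= 0) ->
  (forall x, XU x -> 0 < V x) ->
  (forall xi, trajectory X XI f T xi ->
     forall k, (k < T)%N ->
       ((V (xi k.+1) - V (xi k))%:E <
        (ereal_inf ((fun x => (V x)%:E) @` XU) - ereal_sup ((fun x => (V x)%:E) @` XI))
          * (T%:R^-1)%:E)%E) ->
  forall xi, trajectory X XI f T xi ->
    forall k, (k <= T)%N -> ~ XU (xi k).
Proof.
move=> _ _ _ disjIU _ _ V_XI V_XU step xi xi_traj k k_le_T xkU.
have xi0I : XI (xi 0%N) by case: xi_traj.
have [i inf_eq /andP[i_ge0 i_le]] :=
  ereal_inf_image_fin xkU (fun x Ux => ltW (V_XU x Ux)).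
have [s sup_eq /andP[s_ge s_le0]] := ereal_sup_image_fin xi0I V_XI.
have k_gt0 : (0 < k)%N.
  rewrite lt0n; apply/eqP => k0; move: xkU; rewrite k0 => x0U.
  by have : (XI `&` XU) (xi 0%N) by []; rewrite disjIU.
have gap : V (xi k) - V (xi 0%N) < i - s.
  apply: (increments_lt_gap (u := V \o xi) (T := T)); first by rewrite k_gt0.
    by rewrite subr_ge0 (le_trans s_le0 i_ge0).
  move=> j j_lt_k; have := step xi xi_traj j (leq_trans j_lt_k k_le_T).
  by rewrite inf_eq sup_eq -EFinB -EFinM lte_fin.
by have := lerB i_le s_ge; rewrite leNgt gap.
Qed.
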